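(* Let $\mathcal{M}=((\{X_t\},X),\mathcal{A},\psi,\{Q_t\},(c,h),T)$ be an approximable MDP with terminal cost decomposition $h=h_1+h_2$, data $b,f_1,f_2$ and weight function $w$ as in the context, and let $J_t$ be its optimal cost-to-go functions. For $\lambda>0$ let $\tilde J_t^{\lambda}$ be the optimal cost-to-go functions of the $\lambda$-smoothed MDP $\tilde{\mathcal{M}}_\lambda$. Then for every $\theta>0$ there exists $\Lambda\in\mathbb{R}$ such that for all $\lambda>\Lambda$ and all $t\in\{0,\dots,T-1\}$, $$\sup_{x\in X_t}\big|\tilde J^{\lambda}_t(x)-J_t(x)\big|\le\big(\|J_T\|_w+\|\tilde J^{\lambda}_T\|_w\big)\,\theta .$$
   Context: A finite horizon MDP $\mathcal{M}=((\{X_t\}_{t},X),\mathcal{A},\psi,\{Q_t\}_t,(c,h),T)$ consists of: a state space $X$ with Borel subsets $X_t\subseteq X$ (state space at time $t$); a locally compact Borel space $\mathcal{A}$ of actions with metric $d_A$; a map $\psi$ assigning to each $x\in X$ a measurable set $\psi(x)\subseteq\mathcal{A}$ of feasible actions, with $\mathbb{K}_t=\{(x,a):x\in X_t,a\in\psi(x)\}$, $\mathbb{K}=\{(x,a):x\in X,a\in\psi(x)\}$ measurable; stochastic kernels $Q_t(\cdot\mid x,a)$, probability measures on $X_{t+1}$ measurable in $(x,a)$; a measurable stage cost $c:\mathbb{K}\to\mathbb{R}$; a measurable terminal cost $h:X\to\mathbb{R}$; a horizon $T\in\mathbb{N}$. Its optimal cost-to-go functions are $J_T=h$ on $X_T$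 and $J_t(x)=\inf_{a\in\psi(x)}\{c(x,a)+\int_{X_{t+1}}J_{t+1}(y)Q_t(dy\mid x,a)\}$ for $x\in X_t$, $t=T-1,\dots,0$. For $v:X\to\mathbb{R}$ set $\zeta_{v,t}(x,a)=\int_{X_{t+1}}v(y)Q_t(dy\mid x,a)$. For a positive function $w$, $\|v\|_w=\sup_x |v(x)|/w(x)$. The Hausdorff distance of sets is $d_H$. The MDP is approximable if: (1) $X=\mathbb{R}^m$ (Euclidean metric $d_X$); (2) $\psi(x)$ is compact for all $x$; (3) $d_H(\psi(x),\psi(y))\le L_\psi d_X(x,y)$ for some $L_\psi>0$; (4) $c$ is Lipschitz on $\mathbb{K}$ (constant $L_c$), and $h=h_1+h_2$ where $h_1$ is Lipschitz and $h_2(x)=f_1(x)$ if $x<b$ (componentwise), $h_2(x)=f_2(x)$ otherwise, for some $b\in\mathbb{R}^m$ and bounded Lipschitz $f_1,f_2$; and there are a positive lower semicontinuous $w:X\to\mathbb{R}$ and $\bar c>0$ with $|h_1(x)|+\|h_2\|_\infty+\sup_{a\in\psi(x)}|c(x,a)|\le\bar c\,w(x)$; (5) $\zeta_{w,t}$ is upper semicontinuous on $\mathbb{K}_t$ and $\zeta_{w,t}(x,a)\le\bar d\,w(x)$ on $\mathbb{K}_t$ for some $\bar d>0$; (6) for each bounded continuous $v$ and each $t$, $\zeta_{v,t}$ is continuous on $\mathbb{K}$; (7) there is $L_q>0$ such that for every $t$, all $(x,a),(y,a')\in\mathbb{K}_t$ and every Lipschitz $v$ with constant $L_v$, $|\zeta_{v,t}(x,a)-\zeta_{v,t}(y,a')|\le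 L_qL_v(d_X(x,y)+d_A(a,a'))$; (8) for every $\theta>0$ there is $\Lambda$ with $\sup_{x\in X,u\in\psi(x)}\int_{\mathcal{R}_{\lambda,b}}w(y)Q_{T-1}(dy\mid x,u)<\theta$ for all $\lambda>\Lambda$. Here $g_{\lambda,b}(x)=\prod_{i=1}^m g_i(x)$ with $g_i(x)=1$ if $x_i\le b_i-1/\lambda$, $g_i(x)=-\lambda(x_i-b_i)$ if $b_i-1/\lambda<x_i<b_i$, $g_i(x)=0$ if $x_i\ge b_i$, and $\mathcal{R}_{\lambda,b}=\{x: g_{\lambda,b}(x)\ne\mathbb{1}_{\{z:z<b\}}(x)\}$. The $\lambda$-smoothed MDP $\tilde{\mathcal{M}}_\lambda$ is $\mathcal{M}$ with terminal cost $h$ replaced by $h_1+\tilde h_\lambda$, where $\tilde h_\lambda=f_1g_{\lambda,b}+f_2(1-g_{\lambda,b})$. *)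

From HB Require Import structures.
From mathcomp Require Import all_boot all_order all_algebra.
From mathcomp Require Import all_classical all_reals all_analysis.
From mathcomp Require Import measurable_realfun.
Set Implicit Arguments. Unset Strict Implicit. Unset Printing Implicit Defensive.
Import Order.TTheory GRing.Theory Num.Theory.
Import numFieldNormedType.Exports.
Local Open Scope classical_set_scope.
Local Open Scope ring_scope.

Definition stateB (R : realType) (m : nat) :=
  g_sigma_algebraType (@open 'rV[R]_m).
Definition actB (R : realType) (A : pseudoPMetricType R) :=
  g_sigma_algebraType (@open A).

Definition dX (R : realType) (m : nat) (x y : 'rV[R]_m) : R :=
  Num.sqrt (\sum_(i < m) (x ord0 i - y ord0 i) ^+ 2).

Definition hausdorff_dist (R : realType) (A : Type) (dA : A -> A -> R)
    (S1 S2 : set A) : \bar R :=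
  maxe (ereal_sup [set ereal_inf [set (dA a b)%:E | b in S2] | a in S1])
       (ereal_sup [set ereal_inf [set (dA a b)%:E | a in S1] | b in S2]).

Definition usc_on (T : topologicalType) (R : realType) (D : set T)
    (f : T -> \bar R) : Prop :=
  forall p, D p -> forall r : R, (f p < r%:E)%E ->
    within D (nbhs p) [set q | (f q < r%:E)%E].

Definition vlt (R : realType) (m : nat) (x b : 'rV[R]_m) : Prop :=
  forall i : 'I_m, x ord0 i < b ord0 i.

Definition g_coord (R : realType) (lam bi xi : R) : R :=
  if xi <= bi - lam^-1 then 1 else if xi < bi then - lam * (xi - bi) else 0.
Definition g_lb (R : realType) (m : nat) (lam : R) (b x : 'rV[R]_m) : R :=
  \prod_(i < m) g_coord lam (b ord0 i) (x ord0 i).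
Definition ind_lt (R : realType) (m : nat) (b x : 'rV[R]_m) : R :=
  if `[< vlt x b >] then 1 else 0.
Definition Rset (R : realType) (m : nat) (lam : R) (b : 'rV[R]_m) : set 'rV[R]_m :=
  [set x | g_lb lam b x <> ind_lt b x].

Definition h2fun (R : realType) (m : nat) (b : 'rV[R]_m) (f1 f2 : 'rV[R]_m -> R)
  (x : 'rV[R]_m) : R := if `[< vlt x b >] then f1 x else f2 x.
Definition htilde (R : realType) (m : nat) (lam : R) (b : 'rV[R]_m)
  (f1 f2 : 'rV[R]_m -> R) (x : 'rV[R]_m) : R :=
  f1 x * g_lb lam b x + f2 x * (1 - g_lb lam b x).

(* Optimal cost-to-go functions J_t, t = 0..T, of a finite-horizon MDP with
   state sets Xs, feasible actions psi, kernels Q, stage cost c,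
   terminal cost h and horizon T.  aux k = J_{T-k}. *)
Section CostToGo.
Variables (R : realType) (m : nat) (A : pseudoPMetricType R).
Variables (Xs : nat -> set 'rV[R]_m) (psi : 'rV[R]_m -> set A)
  (Q : nat -> 'rV[R]_m -> A -> probability (stateB R m) R)
  (c : 'rV[R]_m -> A -> R) (h : 'rV[R]_m -> R) (T : nat).

Fixpoint ctg_aux (k : nat) : 'rV[R]_m -> \bar R :=
  match k with
  | 0 => fun x => (h x)%:E
  | k'.+1 => fun x => ereal_inf [set ((c x a)%:E +
        \int[Q (T - k'.+1) x a]_(y in Xs (T - k')) ctg_aux k' y)%E | a in psi x]
  end.

Definition cost_to_go (t : nat) : 'rV[R]_m -> \bar R := ctg_aux (T - t).
End CostToGo.

Definition wnorm (R : realType) (m : nat) (w : 'rV[R]_m -> R)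
  (v : 'rV[R]_m -> \bar R) : \bar R :=
  ereal_sup (range (fun x => (`|v x| * ((w x)^-1)%:E)%E)).

Definition zeta (R : realType) (m : nat) (A : Type) (Xs : nat -> set 'rV[R]_m)
  (Q : nat -> 'rV[R]_m -> A -> probability (stateB R m) R)
  (v : 'rV[R]_m -> R) (t : nat) (x : 'rV[R]_m) (a : A) : \bar R :=
  (\int[Q t x a]_(y in Xs t.+1) (v y)%:E)%E.

From HB Require Import structures.
From mathcomp Require Import all_boot all_order all_algebra.
From mathcomp Require Import all_classical all_reals all_analysis.
From mathcomp Require Import measurable_realfun.
From mathcomp Require Import lra zify.
Import Order.TTheory GRing.Theory Num.Theory.
Import numFieldNormedType.Exports.
Local Open Scope classical_set_scope.
Local Open Scope ring_scope.

(* Both MDPs have the same stage costs and kernels and differ only in the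
   terminal cost, and [h1 + htilde] agrees with [h1 + h2fun] off [Rset lam b].
   On [Rset lam b] their difference is at most [(||J_T||_w + ||Jl_T||_w) w], so
   after one Bellman step the error is bounded by that constant times the
   [Q_{T-1}]-integral of [w] over [Rset lam b], which is below [theta] by the
   tail condition (8).  Every further Bellman step is non-expansive since the
   kernels are probability measures carried by the next state set; the weight
   bounds (4)-(5) keep all the integrals involved finite. *)

Section ereal_facts.
Local Open Scope ereal_scope.
Context (R : realType).
Implicit Types (x y : \bar R) (e : R).

Lemma lee_abs_subEFin x y e : x \is a fin_num -> y \is a fin_num ->
  `|x - y| <= e%:E <-> x <= y + e%:E /\ y <= x + e%:E.
Proof.
move=> /fineK <- /fineK <-; rewrite -EFinB -!EFinD !lee_fin ler_norml.
by split => [/andP[? ?]|[? ?]]; [split|apply/andP; split]; lra.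
Qed.

Lemma lee_abs_EFin x (B : R) : (- B)%:E <= x -> x <= B%:E -> `|x| <= B%:E.
Proof.
move=> Bx xB; have /fineK xE : x \is a fin_num.
  by rewrite fin_numElt (lt_le_trans _ Bx) ?ltNyr // (le_lt_trans xB) ?ltry.
by move: Bx xB; rewrite -xE abse_EFin !lee_fin ler_norml => -> ->.
Qed.

Lemma ereal_inf_le_shift (I : Type) (P : set I) (f g : I -> \bar R) e :
  (forall i, P i -> f i <= g i + e%:E) ->
  ereal_inf (f @` P) <= ereal_inf (g @` P) + e%:E.
Proof.
move=> fg; rewrite -leeBlDr //; apply: le_ereal_inf_tmp => _ [i Pi <-].
by rewrite leeBlDr // (le_trans _ (fg i Pi)) //; apply: ereal_inf_lbound; exists i.
Qed.

Lemma abse_ereal_inf_le (I : Type) (P : set I) (f : I -> \bar R) (B : R) :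
  P !=set0 -> (forall i, P i -> `|f i| <= B%:E) -> `|ereal_inf (f @` P)| <= B%:E.
Proof.
move=> [i0 Pi0] fB; apply: lee_abs_EFin.
  apply: le_ereal_inf_tmp => _ [i Pi <-].
  by rewrite EFinN leeNl (le_trans _ (fB i Pi)) // -abseN lee_abs.
apply: le_trans (fB i0 Pi0); apply: le_trans (lee_abs _).
by apply: ereal_inf_lbound; exists i0.
Qed.

Lemma ereal_sup_addr_le (S : set (\bar R)) y z : S 0 -> 0 <= y ->
  (forall x, S x -> x + y <= z) -> ereal_sup S + y <= z.
Proof.
move=> S0; case: y => [y| |] // y0 Sz.
- by rewrite -leeBrDr //; apply: ge_ereal_sup => x Sx; rewrite leeBrDr // Sz.
- by have := Sz 0 S0; rewrite add0e leye_eq => /eqP ->; exact: leey.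
Qed.

Lemma ereal_sup_summand_le (I : Type) (P : set I) (f : I -> R) (u : R) y (B : R) :
  (0 <= u)%R -> 0 <= y -> u%:E + y + ereal_sup [set (f i)%:E | i in P] <= B%:E ->
  forall i, P i -> (f i <= B)%R.
Proof.
move=> u_ge0 y_ge0 uyB i Pi.
have fi : (f i)%:E <= ereal_sup [set (f j)%:E | j in P].
  by apply: ereal_sup_ubound; exists i.
by rewrite -lee_fin (le_trans fi) // (le_trans _ uyB) // leeDr // adde_ge0.
Qed.

(* If [x <= y + e], lower bounds [s] of [x^+] and [r] of [y^-] become lower
   bounds of [y^+] and [x^-] after subtracting [e], and nothing is lost
   because [s] and [r] cannot both exceed [e]. *)
Lemma le_shift_pos_neg x y (s r e : R) : (0 <= s)%R -> (0 <= r)%R -> (0 <= e)%R ->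
  s%:E <= maxe x 0 -> r%:E <= maxe (- y) 0 -> x <= y + e%:E ->
  [/\ (Num.max (s - e) 0)%:E <= maxe y 0, (Num.max (r - e) 0)%:E <= maxe (- x) 0 &
      (s + r <= Num.max (s - e) 0 + Num.max (r - e) 0 + e)%R].
Proof.
move=> s0 r0 e0 sx ry xy.
move: sx ry; rewrite le_max lee_fin => /orP sx; rewrite le_max lee_fin => /orP ry.
have xr : r%:E <= - y -> x <= (e - r)%:E.
  by rewrite leeNr => yr; rewrite (le_trans xy) // EFinB addeC leeD2r.
split.
- rewrite le_max; have [|se] := lerP (s - e) 0; first by rewrite lexx orbT.
  case: sx => [sx|?]; last by exfalso; lra.
  by apply/orP; left; rewrite EFinB leeBlDr // (le_trans sx xy).
- rewrite le_max; have [|re] := lerP (r - e) 0; first by rewrite lexx orbT.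
  case: ry => [/xr ry|?]; last by exfalso; lra.
  by apply/orP; left; rewrite leeNr -EFinN opprB.
- have maxr_ge (u : R) : (u <= Num.max u 0 /\ 0 <= Num.max u 0)%R.
    by rewrite !le_max !lexx orbT.
  have [] := maxr_ge (s - e)%R; have [] := maxr_ge (r - e)%R.
  case: sx => [sx|?]; last lra; case: ry => [/xr ry|?]; last lra.
  by have := le_trans sx ry; rewrite lee_fin; lra.
Qed.
End ereal_facts.

Section lower_integral.
Local Open Scope ereal_scope.
Context d (T : measurableType d) (R : realType).
Variable mu : {measure set T -> \bar R}.

(* The cost-to-go functions are not known to be measurable.  The integral of
   a non-negative function is nevertheless the supremum of the integrals of
   the simple functions below it, which is enough for the comparisons below;
   only the comparison functions [E], [w] are required to be measurable. *)
Lemma ge0_le_integral_nonmeas (D : set T) (f g : T -> \bar R) :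
  (forall x, D x -> 0 <= f x) -> (forall x, D x -> f x <= g x) ->
  \int[mu]_(x in D) f x <= \int[mu]_(x in D) g x.
Proof.
move=> f0 fg; rewrite !ge0_integralE //; last first.
  by move=> x Dx; exact: le_trans (f0 x Dx) (fg x Dx).
apply: ereal_sup_le => _ [h hf <-]; exists h => // x.
apply: le_trans (hf x) _; rewrite /patch; case: ifP => // /[!inE] Dx.
exact: fg.
Qed.

Import HBNNSimple.

Lemma nnsfun_integral_le_shift (s r : {nnsfun T >-> R}) (F G : T -> \bar R)
    (E : T -> R) :
  measurable_fun setT E -> (forall x, 0 <= E x)%R ->
  (forall x, F x <= G x + (E x)%:E) ->
  (forall x, (s x)%:E <= F^\+ x) -> (forall x, (r x)%:E <= G^\- x) ->
  \int[mu]_x (r x)%:E + \int[mu]_x (s x)%:E <=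
  \int[mu]_x G^\+ x + \int[mu]_x F^\- x + \int[mu]_x (E x)%:E.
Proof.
move=> mE E0 FGE sF rG.
pose u x := Num.max (s x - E x)%R 0%R; pose v x := Num.max (r x - E x)%R 0%R.
have shift x : [/\ (u x)%:E <= G^\+ x, (v x)%:E <= F^\- x &
    (s x + r x <= u x + v x + E x)%R].
  rewrite funeposE funenegE; apply: le_shift_pos_neg; rewrite ?fun_ge0 //.
  - by rewrite -funeposE.
  - by rewrite -funenegE.
have mEE : measurable_fun setT (EFin \o E) by exact/measurable_EFinP.
have mEu : measurable_fun setT (EFin \o u).
  by apply/measurable_EFinP; apply: measurable_maxr => //; exact: measurable_funB.
have mEv : measurable_fun setT (EFin \o v).
  by apply/measurable_EFinP; apply: measurable_maxr => //; exact: measurable_funB.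
have u0 x : 0 <= (u x)%:E by rewrite lee_fin le_max lexx orbT.
have v0 x : 0 <= (v x)%:E by rewrite lee_fin le_max lexx orbT.
have mEr : measurable_fun setT (EFin \o r) by exact/measurable_EFinP.
have mEs : measurable_fun setT (EFin \o s) by exact/measurable_EFinP.
rewrite -ge0_integralD //; try by move=> x _; rewrite lee_fin.
apply: (@le_trans _ _ (\int[mu]_x ((u x)%:E + (v x)%:E + (E x)%:E))).
  apply: ge0_le_integral => //.
  - by move=> x _; rewrite adde_ge0 // lee_fin.
  - exact: emeasurable_funD.
  - by apply: emeasurable_funD; first exact: emeasurable_funD.
  - move=> x _; have [_ _] := shift x.
    by rewrite -!EFinD lee_fin; lra.
rewrite ge0_integralD //; last 3 first.
- by move=> x _; rewrite adde_ge0.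
- exact: emeasurable_funD.
- by move=> x _; rewrite lee_fin.
rewrite ge0_integralD //; apply: leeD => //; apply: leeD;
  apply: ge0_le_integral_nonmeas => // x _; have [] := shift x;
  by rewrite ?funeposE ?funenegE.
Qed.

Lemma integral_pos_neg_le_shift (F G : T -> \bar R) (E : T -> R) :
  measurable_fun setT E -> (forall x, 0 <= E x)%R ->
  (forall x, F x <= G x + (E x)%:E) ->
  \int[mu]_x F^\+ x + \int[mu]_x G^\- x <=
  \int[mu]_x G^\+ x + \int[mu]_x F^\- x + \int[mu]_x (E x)%:E.
Proof.
move=> mE E0 FGE.
rewrite [X in X + _]ge0_integralTE; last by move=> x; exact: funepos_ge0.
apply: ereal_sup_addr_le.
- by exists nnsfun0; [move=> x /=; exact: funepos_ge0 | exact: sintegral0].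
- by apply: integral_ge0 => x _; exact: funeneg_ge0.
move=> _ [s sF <-]; rewrite [X in X <= _]addeC ge0_integralTE; last first.
  by move=> x; exact: funeneg_ge0.
apply: ereal_sup_addr_le.
- by exists nnsfun0; [move=> x /=; exact: funeneg_ge0 | exact: sintegral0].
- exact: sintegral_ge0.
move=> _ [r rG <-]; rewrite -!integralT_nnsfun.
exact: nnsfun_integral_le_shift.
Qed.

Lemma integral_le_shift (D : set T) (F G : T -> \bar R) (E : T -> R) :
  measurable D -> measurable_fun D E -> (forall x, D x -> 0 <= E x)%R ->
  (forall x, D x -> F x <= G x + (E x)%:E) ->
  \int[mu]_(x in D) F^\- x \is a fin_num ->
  \int[mu]_(x in D) G^\- x \is a fin_num ->
  \int[mu]_(x in D) F x <= \int[mu]_(x in D) G x + \int[mu]_(x in D) (E x)%:E.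
Proof.
move=> mD mE E0 FGE fF fG.
have mED : measurable_fun setT (E \_ D) by exact/(measurable_restrictT _ _).1.
have ED_ge0 x : (0 <= (E \_ D) x)%R.
  by rewrite /patch; case: ifP => // /[!inE] /E0.
have FGED x : (F \_ D) x <= (G \_ D) x + ((E \_ D) x)%:E.
  by rewrite /patch; case: ifP => [/[!inE] /FGE //|_]; rewrite add0e.
have := integral_pos_neg_le_shift _ _ _ mED ED_ge0 FGED.
rewrite !funepos_restrict !funeneg_restrict -!integral_mkcond.
have -> : \int[mu]_x ((E \_ D) x)%:E = \int[mu]_(x in D) (E x)%:E.
  by rewrite [RHS]integral_mkcond; apply: eq_integral => x _; rewrite /patch; case: ifP.
rewrite (integralE mu D F) (integralE mu D G) leeBlDr //; move: fG.
set c := \int[mu]_(x in D) G^\+ x; set b := \int[mu]_(x in D) F^\- x.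
set k := \int[mu]_(x in D) (E x)%:E; set e := \int[mu]_(x in D) G^\- x.
move=> fe; rewrite -leeBrDr // => FG.
by rewrite (addeAC (c - e)) -(addeAC c) -(addeAC (c + b)) FG.
Qed.

Lemma integral_le_weight_bound (D : set T) (F : T -> \bar R) (w : T -> R) (M W : R) :
  measurable D -> measurable_fun D w -> (0 <= M)%R -> (forall x, D x -> 0 <= w x)%R ->
  (forall x, D x -> `|F x| <= (M * w x)%:E) ->
  \int[mu]_(x in D) (w x)%:E <= W%:E ->
  [/\ \int[mu]_(x in D) F^\- x \is a fin_num,
      \int[mu]_(x in D) F x \is a fin_num &
      `|\int[mu]_(x in D) F x| <= (M * W)%:E].
Proof.
move=> mD mw M0 w0 FM wW.
have MwW : \int[mu]_(x in D) (M * w x)%:E <= (M * W)%:E.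
  under eq_integral do rewrite EFinM.
  rewrite ge0_integralZl_EFin //; last exact/measurable_EFinP.
  by rewrite EFinM; apply: lee_wpmul2l; rewrite // lee_fin.
have Fpos : \int[mu]_(x in D) F^\+ x <= (M * W)%:E.
  apply: le_trans MwW; apply: ge0_le_integral_nonmeas => x Dx; first exact: funepos_ge0.
  rewrite funeposE ge_max (le_trans _ (FM x Dx)) ?lee_abs //=.
  by rewrite (le_trans _ (FM x Dx)) // abse_ge0.
have Fneg : \int[mu]_(x in D) F^\- x <= (M * W)%:E.
  apply: le_trans MwW; apply: ge0_le_integral_nonmeas => x Dx; first exact: funeneg_ge0.
  rewrite funenegE ge_max (le_trans _ (FM x Dx)) ?lee_abs //=.
    by rewrite (le_trans _ (FM x Dx)) // abse_ge0.
  by rewrite -abseN lee_abs.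
have pos0 : 0 <= \int[mu]_(x in D) F^\+ x.
  by apply: integral_ge0 => x _; exact: funepos_ge0.
have neg0 : 0 <= \int[mu]_(x in D) F^\- x.
  by apply: integral_ge0 => x _; exact: funeneg_ge0.
have fpos : \int[mu]_(x in D) F^\+ x \is a fin_num.
  by rewrite ge0_fin_numE // (le_lt_trans Fpos) // ltry.
have fneg : \int[mu]_(x in D) F^\- x \is a fin_num.
  by rewrite ge0_fin_numE // (le_lt_trans Fneg) // ltry.
rewrite (integralE mu D F); split => //; first by rewrite fin_numB fpos fneg.
move: pos0 neg0 Fpos Fneg; rewrite -(fineK fpos) -(fineK fneg) !lee_fin.
by move=> *; rewrite ler_norml; apply/andP; split; lra.
Qed.

Lemma integral_indic_le (D S : set T) (f : T -> R) (K : R) :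
  measurable D -> measurable S -> measurable_fun setT f ->
  (forall x, 0 <= f x)%R -> (0 <= K)%R ->
  \int[mu]_(x in D) (K * (\1_S x * f x))%:E <= K%:E * \int[mu]_(x in S) (f x)%:E.
Proof.
move=> mD mS mf f_ge0 K_ge0.
have mIf : measurable_fun D (fun x => \1_S x * f x)%R.
  by apply: measurable_funM; [exact: measurable_indic | exact: measurable_funS mf].
have If_ge0 x : (0 <= \1_S x * f x)%R by rewrite mulr_ge0 // indicE.
under eq_integral do rewrite EFinM.
rewrite ge0_integralZl_EFin //; last 2 first.
- by move=> x _; rewrite lee_fin.
- exact/measurable_EFinP.
apply: lee_wpmul2l; first by rewrite lee_fin.
rewrite integral_mkcond [X in (_ <= X)%E]integral_mkcond.
apply: ge0_le_integral_nonmeas => x _; rewrite /patch.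
  by case: ifP; rewrite // lee_fin.
rewrite indicE; case: ifP => _; case: ifP => Sx; rewrite ?mul1r ?mul0r //.
by rewrite lee_fin.
Qed.
End lower_integral.
Arguments integral_le_shift {d T R mu D F G E}.
Arguments integral_le_weight_bound {d T R mu D F w M W}.
Arguments integral_indic_le {d T R mu D S f K}.

Lemma lower_semicontinuous_Borel_measurable (T : ptopologicalType) (R : realType)
    (f : T -> R) :
  lower_semicontinuous (fun x => (f x)%:E) ->
  measurable_fun setT (f : g_sigma_algebraType (@open T) -> R).
Proof.
move=> lsc_f; apply/measurable_EFinP.
apply: (measurability _ (ErealGenOInfty.measurableE R)).
move=> /= _ [_ [a ->]] <-; apply: measurableI => //; apply: sub_sigma_algebra.
by rewrite preimage_itvoy; move/lower_semicontinuousP : lsc_f; exact.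
Qed.

Lemma measurable_coord (R : realType) (m : nat) (i : 'I_m) (U : set R) :
  open U -> measurable ((fun x : 'rV[R]_m => x ord0 i) @^-1` U : set (stateB R m)).
Proof.
move=> oU; apply: sub_sigma_algebra.
exact: (continuousP _).1 (@coord_continuous R 1 m ord0 i) _ oU.
Qed.

Section smoothing.
Context {R : realType} {lam : R}.
Hypothesis lam_gt0 : 0 < lam.

Lemma g_coord_ge0_le1 (bi xi : R) : 0 <= g_coord lam bi xi <= 1.
Proof.
rewrite /g_coord; case: ifP => [_|/negbT]; first by rewrite ler01 lexx.
rewrite -ltNge => bxi; case: ifP => xbi; last by rewrite lexx ler01.
have lamV : lam * lam^-1 = 1 by rewrite mulfV // gt_eqF.
by apply/andP; split; nra.
Qed.

Lemma g_coord_lt1 (bi xi : R) : bi - lam^-1 < xi -> g_coord lam bi xi < 1.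
Proof.
move=> bxi; rewrite /g_coord ifF; last by apply/negbTE; rewrite -ltNge.
case: ifP => xbi; last exact: ltr01.
have lamV : lam * lam^-1 = 1 by rewrite mulfV // gt_eqF.
nra.
Qed.

Lemma g_coord_eq0 (bi xi : R) : bi <= xi -> g_coord lam bi xi = 0.
Proof.
move=> bxi; rewrite /g_coord ifF; last first.
  by apply/negbTE; rewrite -ltNge (lt_le_trans _ bxi) // ltrBlDr ltrDl invr_gt0.
by rewrite ifF //; apply/negbTE; rewrite -leNgt.
Qed.

Context {m : nat} (b : 'rV[R]_m).

Lemma g_lb_lt1 (x : 'rV[R]_m) (i : 'I_m) :
  b ord0 i - lam^-1 < x ord0 i -> g_lb lam b x < 1.
Proof.
move=> /g_coord_lt1 gi; rewrite /g_lb (bigD1 i) //=.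
have /andP[gi0 _] := g_coord_ge0_le1 (b ord0 i) (x ord0 i).
have : 0 <= \prod_(j < m | j != i) g_coord lam (b ord0 j) (x ord0 j) <= 1.
  apply/andP; split; last by apply: prodr_ile1 => j _; exact: g_coord_ge0_le1.
  by apply: prodr_ge0 => j _; case/andP: (g_coord_ge0_le1 (b ord0 j) (x ord0 j)).
by case/andP; nra.
Qed.

Lemma RsetE : Rset lam b =
  [set x | vlt x b] `&` \bigcup_(i in [set: 'I_m]) [set x | b ord0 i - lam^-1 < x ord0 i].
Proof.
apply/seteqP; split => x; rewrite /Rset /ind_lt /=; last first.
  by move=> [xb [i _ /g_lb_lt1 gx]]; rewrite asboolT // => /eqP; rewrite lt_eqF.
have [xb|xb] := pselect (vlt x b).
  rewrite asboolT // => gx; split => //; apply: contrapT => nex; apply: gx.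
  rewrite /g_lb big1 // => i _; rewrite /g_coord ifT // leNgt.
  by apply/negP => xi; apply: nex; exists i.
rewrite asboolF // => gx; exfalso; apply: gx.
have [i bxi] : exists i, b ord0 i <= x ord0 i.
  apply: contrapT => nex; apply: xb => i; rewrite ltNge; apply/negP => bxi.
  by apply: nex; exists i.
by rewrite /g_lb (bigD1 i) //= g_coord_eq0 // mul0r.
Qed.

Lemma measurable_Rset : measurable (Rset lam b : set (stateB R m)).
Proof.
rewrite RsetE; apply: measurableI.
  have -> : [set x | vlt x b] =
      \bigcap_(i in [set: 'I_m]) [set x : 'rV[R]_m | x ord0 i < b ord0 i].
    by apply/seteqP; split => [x xb i _|x xb i]; exact: xb.
  apply: fin_bigcap_measurable => // i _.
  by apply: (@measurable_coord R m i [set y | y < b ord0 i]); exact: open_lt.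
apply: fin_bigcup_measurable => // i _.
by apply: (@measurable_coord R m i [set y | b ord0 i - lam^-1 < y]); exact: open_gt.
Qed.

Lemma htilde_notin_Rset (f1 f2 : 'rV[R]_m -> R) (x : 'rV[R]_m) :
  ~ Rset lam b x -> htilde lam b f1 f2 x = h2fun b f1 f2 x.
Proof.
move=> /contrapT; rewrite /htilde /h2fun /ind_lt => ->.
by case: ifP => _; rewrite ?subrr ?subr0 mulr0 ?mul0r ?addr0 ?add0r mulr1.
Qed.

Lemma htilde_sub_h2fun_le (h1 f1 f2 w : 'rV[R]_m -> R) (k1 k2 : R) (y : 'rV[R]_m) :
  `|h1 y + h2fun b f1 f2 y| <= k1 * w y ->
  `|h1 y + htilde lam b f1 f2 y| <= k2 * w y ->
  `|(h1 y + htilde lam b f1 f2 y) - (h1 y + h2fun b f1 f2 y)| <=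
    (k1 + k2) * (\1_(Rset lam b) y * w y).
Proof.
move=> hJ hL; have [Ry|Ry] := pselect (Rset lam b y).
  rewrite indicE mem_set // mul1r mulrDl [X in _ <= X]addrC.
  by apply: le_trans (ler_normB _ _) _; exact: lerD.
by rewrite htilde_notin_Rset // subrr normr0 indicE memNset // mul0r mulr0.
Qed.
End smoothing.

Section cost_to_go_difference.
Local Open Scope ereal_scope.
Context {R : realType} {m : nat} {A : pseudoPMetricType R}.
Context {Xs : nat -> set 'rV[R]_m} {psi : 'rV[R]_m -> set A} {T : nat}
  {Q : nat -> 'rV[R]_m -> A -> probability (stateB R m) R}
  {c : 'rV[R]_m -> A -> R} {w : 'rV[R]_m -> R} {cbar dbar : R}.
Hypotheses (hXs : forall t, measurable (Xs t : set (stateB R m)))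
  (hpsi_ne : forall x, psi x !=set0)
  (hQ_supp : forall t x a, (t < T)%N -> Q t x a (Xs t.+1) = 1)
  (w_gt0 : forall x, (0 < w x)%R)
  (mw : measurable_fun setT (w : stateB R m -> R))
  (cbar_ge0 : (0 <= cbar)%R) (dbar_ge0 : (0 <= dbar)%R)
  (c_le : forall x a, psi x a -> (`|c x a| <= cbar * w x)%R)
  (zeta_w_le : forall t x a, (t < T)%N -> Xs t x -> psi x a ->
     zeta Xs Q w t x a <= (dbar * w x)%:E).

Local Notation V h k := (ctg_aux Xs psi Q c h T k).

Let mwX t : measurable_fun (Xs t : set (stateB R m)) w.
Proof. exact: measurable_funS mw. Qed.

Let integral_w_le {k x a} : (k < T)%N -> Xs (T - k.+1) x -> psi x a ->
  \int[Q (T - k.+1) x a]_(y in Xs (T - k)) (w y)%:E <= (dbar * w x)%:E.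
Proof.
move=> kT Xx pa; have := zeta_w_le (T - k.+1) x a _ Xx pa; rewrite /zeta.
have -> : ((T - k.+1).+1 = T - k)%N by lia.
by apply; lia.
Qed.

Lemma ctg_aux_le_weight (h : 'rV[R]_m -> R) (M0 : R) :
  (0 <= M0)%R -> (forall y, `|h y| <= M0 * w y)%R ->
  forall k, (k <= T)%N ->
  exists2 M, (0 <= M)%R & forall x, Xs (T - k) x -> `|V h k x| <= (M * w x)%:E.
Proof.
move=> M0_ge0 hM0; elim=> [|k IH] kT; first by exists M0 => // x _; rewrite lee_fin.
have [M M_ge0 VM] := IH (ltnW kT).
exists (cbar + M * dbar)%R => [|x Xx]; first by rewrite addr_ge0 // mulr_ge0.
apply: abse_ereal_inf_le => // a pa.
have [_ _ intM] := integral_le_weight_bound (hXs (T - k)) (mwX _) M_ge0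
  (fun y _ => ltW (w_gt0 y)) VM (integral_w_le kT Xx pa).
apply: le_trans (lee_abs_add _ _) _.
by rewrite mulrDl EFinD abse_EFin -mulrA leeD // lee_fin c_le.
Qed.

Lemma ctg_aux_diff_step (hh hl : 'rV[R]_m -> R) (Mh Ml : R) (k : nat)
    (E : 'rV[R]_m -> R) (delta : R) :
  (0 <= Mh)%R -> (0 <= Ml)%R -> (forall y, `|hh y| <= Mh * w y)%R ->
  (forall y, `|hl y| <= Ml * w y)%R -> (k < T)%N ->
  measurable_fun (Xs (T - k) : set (stateB R m)) E ->
  (forall y, Xs (T - k) y -> `|V hl k y - V hh k y| <= (E y)%:E) ->
  (forall x a, Xs (T - k.+1) x -> psi x a ->
     \int[Q (T - k.+1) x a]_(y in Xs (T - k)) (E y)%:E <= delta%:E) ->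
  forall x, Xs (T - k.+1) x -> `|V hl k.+1 x - V hh k.+1 x| <= delta%:E.
Proof.
move=> Mh_ge0 Ml_ge0 hhM hlM kT mE VE intE x Xx.
have [Mhk Mhk_ge0 Vh] := ctg_aux_le_weight _ _ Mh_ge0 hhM _ (ltnW kT).
have [Mlk Mlk_ge0 Vl] := ctg_aux_le_weight _ _ Ml_ge0 hlM _ (ltnW kT).
have fin_V h M0 : (0 <= M0)%R -> (forall y, `|h y| <= M0 * w y)%R ->
    V h k.+1 x \is a fin_num.
  move=> M0_ge0 hM; have [M _ VM] := ctg_aux_le_weight _ _ M0_ge0 hM _ kT.
  by rewrite fin_num_abs (le_lt_trans (VM x _)) ?ltry.
have fin_Vk h y M (VM : forall y, Xs (T - k) y -> `|V h k y| <= (M * w y)%:E) :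
    Xs (T - k) y -> V h k y \is a fin_num.
  by move=> Xy; rewrite fin_num_abs (le_lt_trans (VM y Xy)) ?ltry.
have E_ge0 y : Xs (T - k) y -> (0 <= E y)%R.
  by move=> Xy; rewrite -lee_fin (le_trans _ (VE y Xy)) ?abse_ge0.
have shift F G MF MG : (0 <= MF)%R -> (0 <= MG)%R ->
    (forall y, Xs (T - k) y -> `|F y| <= (MF * w y)%:E) ->
    (forall y, Xs (T - k) y -> `|G y| <= (MG * w y)%:E) ->
    (forall y, Xs (T - k) y -> F y <= G y + (E y)%:E) ->
    forall a, psi x a ->
    (c x a)%:E + \int[Q (T - k.+1) x a]_(y in Xs (T - k)) F y <=
    (c x a)%:E + \int[Q (T - k.+1) x a]_(y in Xs (T - k)) G y + delta%:E.
  move=> MF_ge0 MG_ge0 FM GM FG a pa; have wW := integral_w_le kT Xx pa.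
  have [fF _ _] := integral_le_weight_bound (hXs _) (mwX _) MF_ge0
    (fun y _ => ltW (w_gt0 y)) FM wW.
  have [fG _ _] := integral_le_weight_bound (hXs _) (mwX _) MG_ge0
    (fun y _ => ltW (w_gt0 y)) GM wW.
  rewrite -addeA leeD2l //; apply: le_trans (integral_le_shift (hXs _) mE E_ge0 FG fF fG) _.
  by rewrite leeD2l // intE.
have [hlk hhk] : (forall y, Xs (T - k) y -> V hl k y <= V hh k y + (E y)%:E) /\
                 (forall y, Xs (T - k) y -> V hh k y <= V hl k y + (E y)%:E).
  by split=> y Xy; have /lee_abs_subEFin[] := VE y Xy;
    rewrite ?(fin_Vk _ _ _ Vh) ?(fin_Vk _ _ _ Vl).
apply/lee_abs_subEFin; rewrite ?(fin_V _ _ Ml_ge0 hlM) ?(fin_V _ _ Mh_ge0 hhM) //.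
split; apply: ereal_inf_le_shift.
- exact: shift Mlk_ge0 Mhk_ge0 Vl Vh hlk.
- exact: shift Mhk_ge0 Mlk_ge0 Vh Vl hhk.
Qed.

Lemma cost_to_go_diff_le (hh hl : 'rV[R]_m -> R) (Mh Ml : R) (E : 'rV[R]_m -> R)
    (delta : R) :
  (0 <= Mh)%R -> (0 <= Ml)%R -> (forall y, `|hh y| <= Mh * w y)%R ->
  (forall y, `|hl y| <= Ml * w y)%R ->
  measurable_fun (Xs T : set (stateB R m)) E ->
  (forall y, Xs T y -> `|hl y - hh y| <= E y)%R ->
  (forall x a, Xs T.-1 x -> psi x a ->
     \int[Q T.-1 x a]_(y in Xs T) (E y)%:E <= delta%:E) ->
  forall t, (t < T)%N -> forall x, Xs t x ->
  `|cost_to_go Xs psi Q c hl T t x - cost_to_go Xs psi Q c hh T t x| <= delta%:E.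
Proof.
move=> Mh_ge0 Ml_ge0 hhM hlM mE hE intE.
suff diff n : (n < T)%N -> forall x, Xs (T - n.+1) x ->
    `|V hl n.+1 x - V hh n.+1 x| <= delta%:E.
  move=> t tT x Xx; rewrite /cost_to_go.
  have -> : (T - t = (T - t.+1).+1)%N by lia.
  by apply: diff; [lia | have -> : (T - (T - t.+1).+1 = t)%N by lia].
elim: n => [|n IH] nT.
  apply: (ctg_aux_diff_step _ _ _ _ _ E delta Mh_ge0 Ml_ge0 hhM hlM nT);
    rewrite ?subn0 ?subn1 //.
apply: (ctg_aux_diff_step _ _ _ _ _ _ _ Mh_ge0 Ml_ge0 hhM hlM nT (measurable_cst delta)).
  by move=> y; apply: IH; exact: ltnW.
move=> x a _ _.
rewrite [X in X <= _](_ : _ = delta%:E * Q (T - n.+2) x a (Xs (T - n.+1))).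
  have -> : (T - n.+1 = (T - n.+2).+1)%N by lia.
  by rewrite hQ_supp ?mule1 //; lia.
exact: (@integral_cst _ _ _ (Q (T - n.+2) x a) _ (hXs _) delta%:E).
Qed.
End cost_to_go_difference.

Section weighted_norm.
Local Open Scope ereal_scope.
Context {R : realType} {m : nat} {w : 'rV[R]_m -> R}.
Hypothesis w_gt0 : forall x, (0 < w x)%R.

Lemma wnorm_ge0 (v : 'rV[R]_m -> \bar R) : 0 <= wnorm w v.
Proof.
apply: le_trans (ereal_sup_ubound (ex_intro2 _ _ (0%R : 'rV[R]_m) I erefl)).
by rewrite mule_ge0 // lee_fin invr_ge0 ltW.
Qed.

Lemma wnorm_EFin_le (h : 'rV[R]_m -> R) (k : R) :
  wnorm w (EFin \o h) = k%:E -> forall y, (`|h y| <= k * w y)%R.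
Proof.
move=> hk y; have : `|(h y)%:E| * ((w y)^-1)%:E <= wnorm w (EFin \o h).
  by apply: ereal_sup_ubound; exists y.
by rewrite hk abse_EFin -EFinM lee_fin ler_pdivrMr.
Qed.
End weighted_norm.

Lemma lee_addeMr_EFin (R : realType) (x y z : \bar R) (theta : R) :
  (0 <= x)%E -> (0 <= y)%E -> (0 < theta)%R ->
  (forall a b : R, (0 <= a)%R -> (0 <= b)%R -> x = a%:E -> y = b%:E ->
     (z <= ((a + b) * theta)%:E)%E) ->
  (z <= (x + y) * theta%:E)%E.
Proof.
move=> + + theta_gt0; case: x => [a| |] //; case: y => [b| |] // a_ge0 b_ge0 zab;
  rewrite ?(zab a b) -?lee_fin // ?addey ?addye // gt0_mulye ?leey //.
Qed.

Theorem proposition4 (R : realType) (m : nat)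
  (* action space: locally compact Borel space with metric dA *)
  (A : pseudoPMetricType R) (dA : A -> A -> R)
  (hdA_ball : forall (a : A) (e : R), 0 < e -> ball a e = [set b | dA a b < e])
  (hdA_sep : forall a b : A, dA a b = 0 <-> a = b)
  (hdA_sym : forall a b : A, dA a b = dA b a)
  (hdA_tri : forall a b e : A, dA a e <= dA a b + dA b e)
  (hA_lc : locally_compact [set: A])
  (hA_sepb : exists D : set A, countable D /\ closure D = [set: A])
  (* state sets, feasible actions, kernels, costs, horizon *)
  (Xs : nat -> set 'rV[R]_m)
  (hXs : forall t, measurable (Xs t : set (stateB R m)))
  (psi : 'rV[R]_m -> set A)
  (hpsi_meas : forall x, measurable (psi x : set (actB A)))
  (hpsi_ne : forall x, psi x !=set0)
  (hK_meas : measurable ([set p | psi p.1 p.2] : set (stateB R m * actB A)))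
  (hKt_meas : forall t,
     measurable ([set p | Xs t p.1 /\ psi p.1 p.2] : set (stateB R m * actB A)))
  (T : nat)
  (Q : nat -> 'rV[R]_m -> A -> probability (stateB R m) R)
  (hQ_supp : forall t x a, (t < T)%N -> Q t x a (Xs t.+1) = 1%E)
  (hQ_meas : forall t (U : set (stateB R m)), (t < T)%N -> measurable U ->
     measurable_fun ([set p | Xs t p.1 /\ psi p.1 p.2] : set (stateB R m * actB A))
       (fun p : stateB R m * actB A => Q t p.1 p.2 U))
  (c : 'rV[R]_m -> A -> R)
  (hc_meas : measurable_fun ([set p | psi p.1 p.2] : set (stateB R m * actB A))
       (fun p : stateB R m * actB A => c p.1 p.2))
  (h1 f1 f2 : 'rV[R]_m -> R) (b : 'rV[R]_m) (w : 'rV[R]_m -> R)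
  (* (2) *)
  (hpsi_cpt : forall x, compact (psi x))
  (* (3) *)
  (Lpsi : R) (hLpsi : 0 < Lpsi)
  (hpsi_lip : forall x y,
     (hausdorff_dist dA (psi x) (psi y) <= (Lpsi * dX x y)%:E)%E)
  (* (4) *)
  (Lc : R)
  (hc_lip : forall x a y a', psi x a -> psi y a' ->
     `|c x a - c y a'| <= Lc * (dX x y + dA a a'))
  (hh1_lip : exists L1 : R, forall x y, `|h1 x - h1 y| <= L1 * dX x y)
  (hf1_bd : exists M : R, forall x, `|f1 x| <= M)
  (hf2_bd : exists M : R, forall x, `|f2 x| <= M)
  (hf1_lip : exists L : R, forall x y, `|f1 x - f1 y| <= L * dX x y)
  (hf2_lip : exists L : R, forall x y, `|f2 x - f2 y| <= L * dX x y)
  (hw_pos : forall x, 0 < w x)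
  (hw_lsc : lower_semicontinuous (fun x => (w x)%:E))
  (cbar : R) (hcbar : 0 < cbar)
  (hw_bound : forall x,
     ((`|h1 x|)%:E + ereal_sup (range (fun y => (`|h2fun b f1 f2 y|)%:E))
       + ereal_sup [set (`|c x a|)%:E | a in psi x] <= (cbar * w x)%:E)%E)
  (* (5) *)
  (dbar : R) (hdbar : 0 < dbar)
  (hzw_usc : forall t, (t < T)%N ->
     usc_on [set p : 'rV[R]_m * A | Xs t p.1 /\ psi p.1 p.2]
       (fun p => zeta Xs Q w t p.1 p.2))
  (hzw_bd : forall t x a, (t < T)%N -> Xs t x -> psi x a ->
     (zeta Xs Q w t x a <= (dbar * w x)%:E)%E)
  (* (6) *)
  (hz_cont : forall (v : 'rV[R]_m -> R), (exists M : R, forall x, `|v x| <= M) ->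
     continuous v -> forall t, (t < T)%N ->
     {within [set p : 'rV[R]_m * A | psi p.1 p.2],
       continuous (fun p => zeta Xs Q v t p.1 p.2)})
  (* (7) *)
  (Lq : R) (hLq : 0 < Lq)
  (hz_lip : forall t x a y a', (t < T)%N ->
     Xs t x -> psi x a -> Xs t y -> psi y a' ->
     forall (v : 'rV[R]_m -> R) (Lv : R), 0 <= Lv ->
     (forall x1 x2, `|v x1 - v x2| <= Lv * dX x1 x2) ->
     (`|zeta Xs Q v t x a - zeta Xs Q v t y a'|
        <= (Lq * Lv * (dX x y + dA a a'))%:E)%E)
  (* (8) *)
  (htail : forall theta : R, 0 < theta -> exists Lam : R, forall lam : R, Lam < lam ->
     (ereal_sup [set z | exists x u, psi x u /\
        z = (\int[Q T.-1 x u]_(y in (Rset lam b : set (stateB R m))) (w y)%:E)%E]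
      < theta%:E)%E) :
  let J := cost_to_go Xs psi Q c (fun x => h1 x + h2fun b f1 f2 x) T in
  let Jl := fun lam : R =>
    cost_to_go Xs psi Q c (fun x => h1 x + htilde lam b f1 f2 x) T in
  forall theta : R, 0 < theta -> exists Lam : R, forall lam : R, 0 < lam -> Lam < lam ->
    forall t, (t < T)%N ->
    (ereal_sup [set `|Jl lam t x - J t x| | x in Xs t]
      <= (wnorm w (J T) + wnorm w (Jl lam T)) * theta%:E)%E.
Proof.
move=> J Jl theta theta_gt0.
have mw : measurable_fun setT (w : stateB R m -> R).
  exact: lower_semicontinuous_Borel_measurable.
have c_le x : forall a, psi x a -> `|c x a| <= cbar * w x.
  apply: ereal_sup_summand_le (hw_bound x) => //.
  by apply: le_trans (ereal_sup_ubound (ex_intro2 _ _ x I erefl)); rewrite lee_fin.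
have [Lam hLam] := htail theta theta_gt0.
exists Lam => lam lam_gt0 Lam_lt t tT.
set hJ := fun x => h1 x + h2fun b f1 f2 x.
set hL := fun x => h1 x + htilde lam b f1 f2 x.
have -> : J T = EFin \o hJ by rewrite /J /cost_to_go subnn.
have -> : Jl lam T = EFin \o hL by rewrite /Jl /cost_to_go subnn.
apply: lee_addeMr_EFin; rewrite ?wnorm_ge0 // => k1 k2 k1_ge0 k2_ge0 k1E k2E.
have hJ_le := wnorm_EFin_le hw_pos _ _ k1E; have hL_le := wnorm_EFin_le hw_pos _ _ k2E.
have K_ge0 : 0 <= k1 + k2 by rewrite addr_ge0.
apply: ge_ereal_sup => _ [x Xx <-].
apply: (cost_to_go_diff_le hXs hpsi_ne hQ_supp hw_pos mw (ltW hcbar) (ltW hdbar) c_le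
  hzw_bd _ _ _ _ (fun y => (k1 + k2) * (\1_(Rset lam b) y * w y)) _ k1_ge0 k2_ge0
  hJ_le hL_le) => //.
- apply: measurable_funM => //; apply: measurable_funM.
    exact: measurable_indic (measurable_Rset lam_gt0 b).
  exact: measurable_funS mw.
- by move=> y _; exact: htilde_sub_h2fun_le (hJ_le y) (hL_le y).
- move=> y a _ pa.
  apply: le_trans (integral_indic_le (hXs _) (measurable_Rset lam_gt0 b) mw
    (fun y => ltW (hw_pos y)) K_ge0) _.
  rewrite EFinM lee_wpmul2l ?lee_fin //; apply: le_trans (ltW (hLam lam Lam_lt)).
  by apply: ereal_sup_ubound; exists y, a.
Qed.
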